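(* Let $w\in\{0,1\}^*$ be a $\frac{7}{3}$-power-free word with $|w|\geq 52$. Then $w$ contains both $\mu^3(0)=01101001$ and $\mu^3(1)=10010110$ as subwords.
   Context: $\mu$ is the Thue–Morse morphism on $\{0,1\}^*$, defined by $\mu(0)=01$, $\mu(1)=10$. A word $w'$ is a subword of $w$ if $w=uw'v$ for some words $u,v$. For a rational $\alpha\ge 1$, an $\alpha$-power is a word of the form $x^nx'$ with $x$ a nonempty word, $x'$ a prefix of $x$, $n$ a nonnegative integer and $n+|x'|/|x|=\alpha$. A word is $\alpha$-power-free if none of its subwords is a $\beta$-power for any rational $\beta\geq\alpha$. *)

From mathcomp Require Import all_boot all_order all_algebra.
Set Implicit Arguments. Unset Strict Implicit. Unset Printing Implicit Defensive.
Import GRing.Theory Num.Theory.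

(* Binary words: letter 0 is [false], letter 1 is [true]. *)
Definition word := seq bool.

Definition mu_letter (b : bool) : word := [:: b; ~~ b].
Definition mu (w : word) : word := flatten (map mu_letter w).

Definition subword (w' w : word) : Prop := exists u v, w = u ++ w' ++ v.

Definition is_power (alpha : rat) (y : word) : Prop :=
  exists (x x' : word) (n : nat),
    [/\ x != [::], prefix x' x,
        y = flatten (nseq n x) ++ x' &
        (n%:R + (size x')%:R / (size x)%:R = alpha)%R].

Definition power_free (alpha : rat) (w : word) : Prop :=
  forall (y : word) (beta : rat), subword y w -> (alpha <= beta)%R -> ~ is_power beta y.

From mathcomp Require Import all_boot all_order all_algebra.
From mathcomp Require Import zify.
Import GRing.Theory Num.Theory.

Set Implicit Arguments.
Unset Strict Implicit.
Unset Printing Implicit Defensive.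

(* The proof is a finite search. Grow binary words letter by letter, discarding
   every word that ends with a suffix of length ceil(7p/3) having period p: such
   a suffix is a 7/3-power, so every prefix of a 7/3-power-free word survives
   the pruning. All surviving words of length 52 contain mu^3(0) and mu^3(1),
   hence so does the prefix of length 52 of any 7/3-power-free word. *)

Lemma subwordP (x w : word) : reflect (subword x w) (infix x w).
Proof. by apply: (iffP (@infixP _ x w)) => -[u [v e]]; exists u, v. Qed.

Lemma power_free_infix alpha (u w : word) :
  infix u w -> power_free alpha w -> power_free alpha u.
Proof.
move=> /subwordP [a [b ->]] free_w y beta [c [d u_eq]].
by apply: free_w; exists (a ++ c), (d ++ b); rewrite u_eq -!catA.
Qed.

Definition has_period (p : nat) (y : word) : bool :=
  drop p y == take (size y - p) y.

Lemma has_period_decomp p (y : word) : 0 < p -> has_period p y ->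
  y = flatten (nseq (size y %/ p) (take p y)) ++ take (size y %% p) y.
Proof.
move=> p_gt0; have [n] := ubnP (size y); elim: n y => // n IH y.
have [y_lt_p _ _ | p_le_y size_y /eqP period_y] := ltnP (size y) p.
  by rewrite divn_small // modn_small // take_size.
set z := drop p y.
have size_yz : size y = size z + p by rewrite size_drop subnK.
have z_prefix : z = take (size z) y by rewrite size_drop.
rewrite size_yz divnDr ?dvdnn // divnn p_gt0 addn1 /= modnDr -catA.
rewrite -{1}(cat_take_drop p y) -/z; congr (_ ++ _).
have [z_lt_p | p_le_z] := ltnP (size z) p.
  by rewrite divn_small // modn_small //= -z_prefix.
have period_z : has_period p z.
  by rewrite /has_period {1}z_prefix -(subnK p_le_z) -take_drop subnK // -period_y.
have size_z : size z < n by move: size_y; rewrite size_yz; lia.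
have take_z k : k <= size z -> take k z = take k y.
  by move=> k_le; rewrite z_prefix take_takel.
by rewrite {1}(IH z size_z period_z) !take_z // leq_mod.
Qed.

Lemma has_period_is_power p (y : word) : 0 < p -> p <= size y -> has_period p y ->
  is_power ((size y)%:R / p%:R)%R y.
Proof.
move=> p_gt0 p_le_y period_y.
have mod_le : size y %% p <= p by rewrite ltnW // ltn_pmod.
exists (take p y), (take (size y %% p) y), (size y %/ p); split.
- by rewrite -size_eq0 size_takel // -lt0n.
- by rewrite -(take_takel _ mod_le) prefix_take.
- exact: has_period_decomp.
- rewrite !size_takel ?leq_mod // {3}(divn_eq (size y) p) natrD natrM mulrDl.
  by rewrite mulfK // pnatr_eq0 -lt0n.
Qed.

Lemma ler_nat_ratio (a b c d : nat) : 0 < b -> 0 < d ->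
  ((a%:R / b%:R : rat) <= c%:R / d%:R)%R = (a * d <= c * b).
Proof.
move=> b_gt0 d_gt0.
by rewrite ler_pdivrMr ?ltr0n // mulrAC ler_pdivlMr ?ltr0n // -!natrM ler_nat.
Qed.

Definition power_length (p : nat) : nat := (7 * p).+2 %/ 3.

Definition ends_in_power (v : word) : bool :=
  has (fun p => (power_length p <= size v) &&
                has_period p (drop (size v - power_length p) v))
      (iota 1 (size v)).

Lemma ends_in_power_not_free (v : word) :
  ends_in_power v -> ~ power_free (7%:Q / 3%:Q)%R v.
Proof.
case/hasP=> p; rewrite mem_iota => /andP[p_gt0 _] /andP[len_le period_y] free_v.
set y := drop (size v - power_length p) v in period_y.
have size_y : size y = power_length p by rewrite size_drop subKn.
have y_suffix : subword y v.
  by exists (take (size v - power_length p) v), [::]; rewrite cats0 cat_take_drop.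
have exponent_ge : (7%:Q / 3%:Q <= (size y)%:R / p%:R)%R.
  by rewrite -[(7%:Q)%R]/(7%:R)%R -[(3%:Q)%R]/(3%:R)%R ler_nat_ratio // size_y /power_length; lia.
have p_le_y : p <= size y by rewrite size_y /power_length; lia.
exact: (free_v _ _ y_suffix exponent_ge (has_period_is_power p_gt0 p_le_y period_y)).
Qed.

Definition extend_pruned (ws : seq word) : seq word :=
  [seq v <- [seq rcons u b | u <- ws, b <- [:: false; true]] | ~~ ends_in_power v].

Definition pruned_words (n : nat) : seq word := iter n extend_pruned [:: [::]].

Lemma pruned_words_complete (v : word) :
  (forall u, prefix u v -> ~~ ends_in_power u) -> v \in pruned_words (size v).
Proof.
elim/last_ind: v => [|u b IH] prefixes_ok; first by rewrite inE.
rewrite size_rcons /pruned_words iterS mem_filter prefixes_ok ?prefix_refl //.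
apply: allpairs_f; last by rewrite !inE; case: (b).
by apply: IH => u' pre; apply/prefixes_ok/(prefix_trans pre)/prefix_rcons.
Qed.

Lemma pruned_words_52_contain_mu3 :
  all (fun v => infix (mu (mu (mu [:: false]))) v && infix (mu (mu (mu [:: true]))) v)
      (pruned_words 52).
Proof. by vm_compute. Qed.

Theorem lemma3 (w : seq bool) :
  power_free (7%:Q / 3%:Q)%R w -> 52 <= size w ->
  subword (mu (mu (mu [:: false]))) w /\ subword (mu (mu (mu [:: true]))) w.
Proof.
move=> free_w size_w.
set v := take 52 w.
have v_prefix : prefix v w by rewrite prefix_take.
have prefixes_ok u : prefix u v -> ~~ ends_in_power u.
  move=> u_prefix; apply/negP => /ends_in_power_not_free; apply.
  exact: power_free_infix (prefix_infix_trans u_prefix (prefixW v_prefix)) free_w.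
have size_v : size v = 52 by rewrite size_takel.
have := pruned_words_complete prefixes_ok; rewrite size_v.
move=> /(allP pruned_words_52_contain_mu3)/andP[mu3_0 mu3_1].
by split; apply/subwordP/(infix_prefix_trans _ v_prefix).
Qed.
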